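(* Let $\mathrm{E}$ be a law of the form $\mathrm{x}\simeq\mathrm{x}\diamond f(\mathrm{x},\mathrm{y},\mathrm{z})$, for some word $f$ in $\mathrm{x},\mathrm{y},\mathrm{z}$, which implies $\mathrm{x}\diamond\mathrm{y}\simeq(\mathrm{x}\diamond\mathrm{y})\diamond\mathrm{y}$. Two irreducible words $w,w'\in M_X$ satisfy $w\sim_{\mathrm{E}}w'$ if and only if either they are the same letter of $X$, or $w=w_1\diamond w_2$ and $w'=w_1'\diamond w_2'$ with $w_1\sim_{\mathrm{E}}w_1'$ and $w_2\sim_{\mathrm{E}}w_2'$.
   Context: $M_X$ is the set of words of the free magma on an alphabet $X$. $u\sim_{\mathrm{E}}u'$ means the law $u\simeq u'$ holds in every magma satisfying $\mathrm{E}$. For words $u,u'$, $u'\to_{\mathrm{E}}u$ means $u\sim_{\mathrm{E}}u''\diamond u'$ for some word $u''$ (equivalently, under the hypotheses, $u\sim_{\mathrm{E}}u\diamond u'$). A word is irreducible if it is not of the form $w_1\diamond w_2$ with $w_2\to_{\mathrm{E}}w_1$. *)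

Inductive word (X : Type) : Type :=
| Var : X -> word X
| Op : word X -> word X -> word X.
Arguments Var {X} _.
Arguments Op {X} _ _.

Fixpoint eval {X M : Type} (op : M -> M -> M) (v : X -> M) (w : word X) : M :=
  match w with
  | Var a => v a
  | Op w1 w2 => op (eval op v w1) (eval op v w2)
  end.

Inductive var3 : Type := vx | vy | vz.

Definition satisfiesE (f : word var3) (M : Type) (op : M -> M -> M) : Prop :=
  forall v : var3 -> M, v vx = op (v vx) (eval op v f).

Definition simE (f : word var3) {X : Type} (u u' : word X) : Prop :=
  forall (M : Type) (op : M -> M -> M), satisfiesE f M op ->
    forall v : X -> M, eval op v u = eval op v u'.

Definition arrowE (f : word var3) {X : Type} (u' u : word X) : Prop :=
  exists u'' : word X, simE f u (Op u'' u').

Definition irreducible (f : word var3) {X : Type} (w : word X) : Prop :=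
  ~ (exists w1 w2 : word X, w = Op w1 w2 /\ arrowE f w2 w1).

(* Build a magma satisfying E in which irreducible words keep their syntactic
   shape.  Its elements are letters and formal products [NProd p q] of two
   E-classes; the product of n and m is n itself when n ~E n <> m, and the
   formal product of their classes otherwise.  Sending an element to its
   E-class is a homomorphism to the free E-magma, so this magma satisfies E.
   An irreducible word w1 <> w2 evaluates to NProd [w1] [w2], because
   w1 ~E w1 <> w2 would witness w2 ->E w1; equivalent irreducible words thus
   have the same shape and equivalent components. *)
From Stdlib Require Import ClassicalEpsilon FunctionalExtensionality
  PropExtensionality ProofIrrelevance.

Lemma eval_subst {X Y M : Type} (op : M -> M -> M) (v : X -> M)
  (r : Y -> word X) (w : word Y) :
  eval op v (eval Op r w) = eval op (fun y => eval op v (r y)) w.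
Proof. induction w; simpl; congruence. Qed.

Lemma eval_Var {X : Type} (w : word X) : eval Op Var w = w.
Proof. induction w; simpl; congruence. Qed.

Section FreeModel.
Variables (f : word var3) (X : Type).

Lemma simE_refl (u : word X) : simE f u u.
Proof. intros M op HE v; reflexivity. Qed.

Lemma simE_sym (u u' : word X) : simE f u u' -> simE f u' u.
Proof. intros H M op HE v; symmetry; apply H; exact HE. Qed.

Lemma simE_trans (u u' u'' : word X) :
  simE f u u' -> simE f u' u'' -> simE f u u''.
Proof. intros H1 H2 M op HE v; rewrite (H1 M op HE v); apply H2; exact HE. Qed.

Lemma simE_Op (u1 u2 u1' u2' : word X) :
  simE f u1 u1' -> simE f u2 u2' -> simE f (Op u1 u2) (Op u1' u2').
Proof.
  intros H1 H2 M op HE v; simpl.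
  now rewrite (H1 M op HE v), (H2 M op HE v).
Qed.

Lemma simE_law_instance (r : var3 -> word X) :
  simE f (r vx) (Op (r vx) (eval Op r f)).
Proof.
  intros M op HE v; simpl; rewrite eval_subst.
  exact (HE (fun y => eval op v (r y))).
Qed.

Definition Equot : Type :=
  {c : word X -> Prop | exists w, c = simE f w}.

Definition eclass (w : word X) : Equot :=
  exist _ (simE f w) (ex_intro _ w eq_refl).

Definition erepr (q : Equot) : word X :=
  proj1_sig (constructive_indefinite_description _ (proj2_sig q)).

Lemma Equot_eq (p q : Equot) : proj1_sig p = proj1_sig q -> p = q.
Proof.
  destruct p as [c Hc], q as [d Hd]; simpl; intros ->.
  f_equal; apply proof_irrelevance.
Qed.

Lemma eclass_erepr (q : Equot) : eclass (erepr q) = q.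
Proof.
  apply Equot_eq; unfold erepr; simpl.
  now destruct constructive_indefinite_description.
Qed.

Lemma eclass_eq (u u' : word X) : eclass u = eclass u' <-> simE f u u'.
Proof.
  split.
  - intro H; apply (f_equal (@proj1_sig _ _)) in H; simpl in H.
    rewrite H; apply simE_refl.
  - intro H; apply Equot_eq; simpl.
    apply functional_extensionality; intro t; apply propositional_extensionality.
    split; [apply simE_trans, simE_sym, H | apply simE_trans, H].
Qed.

Definition eop (p q : Equot) : Equot := eclass (Op (erepr p) (erepr q)).

Lemma eop_eclass (u1 u2 : word X) :
  eop (eclass u1) (eclass u2) = eclass (Op u1 u2).
Proof.
  apply eclass_eq, simE_Op; apply eclass_eq; exact (eclass_erepr _).
Qed.

Lemma eval_eclass {Y : Type} (r : Y -> word X) (w : word Y) :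
  eval eop (fun y => eclass (r y)) w = eclass (eval Op r w).
Proof. induction w; simpl; [reflexivity | now rewrite IHw1, IHw2, eop_eclass]. Qed.

Lemma Equot_satisfiesE : satisfiesE f Equot eop.
Proof.
  intro v.
  replace v with (fun y => eclass (erepr (v y)))
    by (apply functional_extensionality; intro y; apply eclass_erepr).
  change (eclass (erepr (v vx)) =
          eop (eclass (erepr (v vx))) (eval eop (fun y => eclass (erepr (v y))) f)).
  rewrite eval_eclass, eop_eclass.
  apply eclass_eq, (simE_law_instance (fun y => erepr (v y))).
Qed.

Inductive shape : Type :=
| NLetter (a : X)
| NProd (p q : Equot).

Definition shape_class (n : shape) : Equot :=
  match n with
  | NLetter a => eclass (Var a)
  | NProd p q => eop p q
  end.

Definition shape_op (n m : shape) : shape :=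
  if excluded_middle_informative
       (shape_class n = eop (shape_class n) (shape_class m))
  then n else NProd (shape_class n) (shape_class m).

Lemma shape_class_op (n m : shape) :
  shape_class (shape_op n m) = eop (shape_class n) (shape_class m).
Proof. unfold shape_op; destruct excluded_middle_informative; auto. Qed.

Lemma shape_class_eval {Y : Type} (v : Y -> shape) (w : word Y) :
  shape_class (eval shape_op v w) = eval eop (fun y => shape_class (v y)) w.
Proof. induction w; simpl; [reflexivity | now rewrite shape_class_op, IHw1, IHw2]. Qed.

Lemma shape_satisfiesE : satisfiesE f shape shape_op.
Proof.
  intro v; unfold shape_op.
  destruct excluded_middle_informative as [_ | Hne]; [reflexivity | exfalso].
  apply Hne; rewrite shape_class_eval.
  exact (Equot_satisfiesE (fun y => shape_class (v y))).
Qed.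

Definition shape_of (w : word X) : shape := eval shape_op NLetter w.

Lemma simE_shape_of (w w' : word X) : simE f w w' -> shape_of w = shape_of w'.
Proof. intro H; exact (H shape shape_op shape_satisfiesE NLetter). Qed.

Lemma shape_class_of (w : word X) : shape_class (shape_of w) = eclass w.
Proof.
  unfold shape_of; rewrite shape_class_eval.
  change (eval eop (fun a => eclass (Var a)) w = eclass w).
  now rewrite eval_eclass, eval_Var.
Qed.

Lemma shape_of_irreducible_Op (w1 w2 : word X) :
  irreducible f (Op w1 w2) -> shape_of (Op w1 w2) = NProd (eclass w1) (eclass w2).
Proof.
  intro Hirr.
  change (shape_op (shape_of w1) (shape_of w2) = NProd (eclass w1) (eclass w2)).
  unfold shape_op; rewrite !shape_class_of.
  destruct excluded_middle_informative as [Hfix | _]; [exfalso | reflexivity].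
  apply Hirr; exists w1, w2; split; [reflexivity |].
  exists w1; apply eclass_eq; now rewrite <- eop_eclass.
Qed.

End FreeModel.

Theorem mainTheorem12 (f : word var3)
  (hE : simE f (Op (Var vx) (Var vy)) (Op (Op (Var vx) (Var vy)) (Var vy)))
  (X : Type) (w w' : word X) :
  irreducible f w -> irreducible f w' ->
  (simE f w w' <->
     (exists a : X, w = Var a /\ w' = Var a) \/
     (exists w1 w2 w1' w2' : word X,
         w = Op w1 w2 /\ w' = Op w1' w2' /\ simE f w1 w1' /\ simE f w2 w2')).
Proof.
  intros Hw Hw'; split.
  - intro H; apply simE_shape_of in H.
    destruct w as [a | w1 w2], w' as [b | w1' w2'].
    + injection H as ->; left; eauto.
    + rewrite (shape_of_irreducible_Op _ _ _ _ Hw') in H; discriminate.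
    + rewrite (shape_of_irreducible_Op _ _ _ _ Hw) in H; discriminate.
    + rewrite (shape_of_irreducible_Op _ _ _ _ Hw),
        (shape_of_irreducible_Op _ _ _ _ Hw') in H.
      right; exists w1, w2, w1', w2'.
      repeat split; apply eclass_eq; congruence.
  - intros [(a & -> & ->) | (w1 & w2 & w1' & w2' & -> & -> & H1 & H2)].
    + apply simE_refl.
    + apply simE_Op; assumption.
Qed.
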